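(* In the setting of the context, suppose $G_2$ is a $p$-group and $S$ is a simple $KH_1$-module with $H_1^2=H_1$. Then $G_2'=H_2$ and $G_1''=G_1$.
   Context: $K$ is algebraically closed of characteristic zero; $G_2$ is a finite group with normal subgroups $G_1$, $H_2$, and $H_1=G_1\cap H_2$, all normal in $G_2$, with $G_2=G_1H_2$ and $[G_2:G_1]=[H_2:H_1]=p$. For a normal subgroup $N$ of a group $X$, an $N$-module $W$ and $x\in X$, ${}^xW$ is $W$ with action $n\cdot w=(x^{-1}nx)w$, and $I_X(W)=\{x\in X:{}^xW\cong W\}$. For a simple $KH_1$-module $S$: $H_1^2=I_{G_2}(S)$. When $H_1^2=H_1$, the modules $T=\operatorname{Ind}_{H_1}^{H_2}S$ (the $KH_2$-module $KH_2S$) and $T'=\operatorname{Ind}_{H_1}^{G_1}S$ (the $KG_1$-module $KG_1S$) are simple, and the decomposition groups are $G_2'=I_{G_2}(T)$ and $G_1''=I_{G_2}(T')$. *)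

(* Modules over K (alg. closed, char 0) are represented up to
   isomorphism by their characters over algC. *)
From HB Require Import structures.
From mathcomp Require Import all_boot all_order all_algebra all_fingroup all_solvable.
From mathcomp Require Import all_field all_character.
Set Implicit Arguments.
Unset Strict Implicit.
Unset Printing Implicit Defensive.

From HB Require Import structures.
From mathcomp Require Import all_boot all_order all_algebra all_fingroup all_solvable.
From mathcomp Require Import all_field all_character.
Import GroupScope.
Import GRing.Theory Num.Theory.
Local Open Scope ring_scope.

(* If g in G fixes Ind_N^H theta, then theta^g is a
   constituent of Res_N Ind_N^H theta^g = Res_N Ind_N^H theta, hence
   theta^g = theta^y for some y in H, and g lies in I_G(theta) y <= H. *)

Lemma constt_Res_Ind_cfclass {gT : finGroupType} {H N : {group gT}}
    {i j : Iirr N} :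
  N <| H -> j \in irr_constt ('Res[N] ('Ind[H] 'chi_i)) ->
  ('chi_j \in 'chi_i ^: H)%CF.
Proof.
move=> nsNH; rewrite inE cfResInd // cfdotZl cfdot_suml mulf_eq0 negb_or.
case/andP=> _; apply: contraR => chi_j_notin; rewrite big1 // => y Hy.
apply/eqP; apply: contraNeq chi_j_notin.
rewrite -conjg_IirrE cfdot_irr eqb_id pnatr_eq0 eqb0 negbK => /eqP <-.
by rewrite conjg_IirrE; apply/cfclassP; exists y.
Qed.

Lemma inertia_Ind_irr (gT : finGroupType) (G H N : {group gT}) (i : Iirr N) :
    H <| G -> N <| G -> N \subset H -> 'I_G['chi_i] \subset H ->
  'I_G['Ind[H] 'chi_i] :=: H.
Proof.
move=> nsHG nsNG sNH sIH; have [sHG nHG] := andP nsHG.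
have nsNH : N <| H := normalS sNH sHG nsNG.
apply/eqP; rewrite eqEsubset sub_Inertia // andbT.
apply/subsetP=> g /setIP[Gg /setIdP[nHg /eqP IndJ]].
rewrite cfConjgInd_norm ?(subsetP (normal_norm nsNG)) // in IndJ.
have chi_g_constt : conjg_Iirr i g \in irr_constt ('Res[N] ('Ind[H] 'chi_i)).
  rewrite inE cfdot_Res_l conjg_IirrE IndJ cfnorm_eq0.
  by rewrite cfInd_eq0 ?irr_char ?irr_neq0.
have /cfclassP[y Hy chiJ] := constt_Res_Ind_cfclass nsNH chi_g_constt.
rewrite conjg_IirrE in chiJ.
have: g \in 'I_G['chi_i] :* y.
  by rewrite -(cfConjg_eqE _ nsNG) ?Gg ?(subsetP sHG y Hy) // chiJ eqxx.
by case/rcosetP=> z /(subsetP sIH) Hz ->; rewrite groupM.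
Qed.

Theorem mainTheorem15 (gT : finGroupType) (p : nat) (G1 G2 H1 H2 : {group gT})
    (i : Iirr H1) :
  prime p -> p.-group G2 ->
  G1 <| G2 -> H2 <| G2 -> H1 :=: G1 :&: H2 -> H1 <| G2 ->
  G2 :=: (G1 * H2)%g -> #|G2 : G1| = p -> #|H2 : H1| = p ->
  'I_G2['chi_i] :=: H1 ->
  'I_G2['Ind[H2] 'chi_i] :=: H2 /\ 'I_G2['Ind[G1] 'chi_i] :=: G1.
Proof.
move=> _ _ nsG1 nsH2 defH1 nsH1 _ _ _ defI.
have sH1G1 : H1 \subset G1 by rewrite defH1 subsetIl.
have sH1H2 : H1 \subset H2 by rewrite defH1 subsetIr.
by split; apply: inertia_Ind_irr; rewrite ?defI.
Qed.
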